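(* Let $N \geq 5$ be an odd integer and $\kappa$ a real number. Let $a>0$ and $b$ be real numbers such that the data set $\Phi_N=(X_1,\dots,X_N)$ consisting of $X_1 = a$, of $\tfrac{N-1}{2}$ points equal to $b - \tfrac{a}{N-1}$, and of $\tfrac{N-1}{2}$ points equal to $-b - \tfrac{a}{N-1}$ satisfies $\mathbb{E}(X)=0$, $\mathbb{E}(X^2)=1$ and $\mathbb{E}(X^4)=\kappa$, and such that $a^2$ is the larger root of the quadratic equation below. Then $a^2$ satisfies $$(a^2)^2 - 2\frac{N-1}{N+1}\,a^2 + G(N,\kappa) = 0,$$ and consequently $$a = a(N,\kappa) = \sqrt{ \frac{N-1}{N+1} + \sqrt{ \Bigl( \frac{N-1}{N+1} \Bigr)^2 - G(N,\kappa)}},$$ where $$G(N,\kappa) = \frac{N(N-1)^2 - (N-1)^3 \kappa}{(N+1)(N-3)}.$$ Furthermore, for fixed $\kappa > 1$, $a(N,\kappa) \sim [N (\kappa - 1)]^{1/4}$ as $N \to \infty$.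
   Context: For a finite data set $(X_1,\dots,X_N)$ and a function $f$, $\mathbb{E}(f(X))$ denotes the empirical mean $\frac1N\sum_{i=1}^N f(X_i)$. Since the mean is $0$ and the second moment is $1$, $\kappa=\mathbb{E}(X^4)$ is the kurtosis of the data set, and $a$ is the number of standard deviations by which $X_1$ lies above the mean. *)

From Stdlib Require Import Reals Lra List.
From Coquelicot Require Import Coquelicot.
Open Scope R_scope.

Definition emp_mean (f : R -> R) (l : list R) : R :=
  fold_right Rplus 0 (map f l) / INR (length l).

Definition PhiN (N : nat) (a b : R) : list R :=
  a :: repeat (b - a / INR (N - 1)) ((N - 1) / 2)
    ++ repeat (- b - a / INR (N - 1)) ((N - 1) / 2).

Definition G (N kappa : R) : R :=
  (N * (N - 1) ^ 2 - (N - 1) ^ 3 * kappa) / ((N + 1) * (N - 3)).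

Definition a_Nk (N kappa : R) : R :=
  sqrt ((N - 1) / (N + 1) + sqrt (((N - 1) / (N + 1)) ^ 2 - G N kappa)).

(* Write N = 2m+1 and c = a/(2m), so that the clusters sit at ±b - c.  The
   second-moment equation expresses b^2 through a^2; substituting it into the
   fourth-moment equation leaves a quadratic equation in a^2, whose larger root
   is p + sqrt(p^2 - G) with p = (N-1)/(N+1).  For the asymptotics put x = 1/N:
   a(N,κ)/(N(κ-1))^(1/4) is then an explicit function of x, continuous at 0
   with value 1. *)
From Stdlib Require Import Reals Lra List Lia.
From Coquelicot Require Import Coquelicot.
Open Scope R_scope.

Lemma sum_map_repeat (f : R -> R) (v s : R) (k : nat) :
  fold_right Rplus s (map f (repeat v k)) = INR k * f v + s.
Proof.
  induction k as [|k IH]; cbn [repeat map fold_right].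
  - simpl; ring.
  - rewrite IH, S_INR; ring.
Qed.

Lemma emp_mean_PhiN_odd (f : R -> R) (m : nat) (a b : R) :
  emp_mean f (PhiN (2 * m + 1) a b) =
  (f a + INR m * (f (b - a / (2 * INR m)) + f (- b - a / (2 * INR m))))
  / (2 * INR m + 1).
Proof.
  unfold emp_mean, PhiN.
  replace (2 * m + 1 - 1)%nat with (2 * m)%nat by lia.
  replace (2 * m / 2)%nat with m by (rewrite Nat.mul_comm, Nat.div_mul; lia).
  cbn [length map fold_right].
  rewrite length_app, !repeat_length, map_app, fold_right_app, !sum_map_repeat.
  replace (S (m + m)) with (2 * m + 1)%nat by lia.
  rewrite plus_INR, !mult_INR; simpl (INR 2); simpl (INR 1).
  replace (1 + 1) with 2 by ring.
  f_equal; ring.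
Qed.

Lemma PhiN_moments_quadratic (N : nat) (kappa a b : R) :
  (5 <= N)%nat -> Nat.Odd N ->
  emp_mean (fun x => x ^ 2) (PhiN N a b) = 1 ->
  emp_mean (fun x => x ^ 4) (PhiN N a b) = kappa ->
  (a ^ 2) ^ 2 - 2 * ((INR N - 1) / (INR N + 1)) * a ^ 2 + G (INR N) kappa = 0.
Proof.
  intros H5 [m ->] H2 H4.
  rewrite emp_mean_PhiN_odd in H2, H4.
  assert (Hm : 2 <= INR m) by (replace 2 with (INR 2) by (simpl; ring); apply le_INR; lia).
  replace (INR (2 * m + 1)) with (2 * INR m + 1) by (rewrite plus_INR, mult_INR; simpl; ring).
  set (M := INR m) in *.
  set (c := a / (2 * M)) in *.
  assert (Hb : b ^ 2 = (2 * M + 1 - a ^ 2 - 2 * M * c ^ 2) / (2 * M)).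
  { apply (Rmult_eq_reg_r (2 * M)); [|lra].
    apply (f_equal (fun z => z * (2 * M + 1))) in H2.
    field_simplify in H2; [|lra].
    field_simplify; lra. }
  assert (Hkappa : kappa = (a ^ 4 + M * (2 * (b ^ 2) ^ 2 + 12 * b ^ 2 * c ^ 2 + 2 * c ^ 4))
                           / (2 * M + 1)).
  { rewrite <- H4; field; lra. }
  rewrite Hkappa, Hb; unfold G, c; field; lra.
Qed.

Lemma larger_root_quadratic (p g y : R) :
  y ^ 2 - 2 * p * y + g = 0 ->
  (forall z, z ^ 2 - 2 * p * z + g = 0 -> z <= y) ->
  y = p + sqrt (p ^ 2 - g).
Proof.
  intros Hy Hmax.
  assert (Hdisc : p ^ 2 - g = (y - p) ^ 2) by nra.
  assert (Hge : p <= y).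
  { assert (p - (y - p) <= y) by (apply Hmax; nra). lra. }
  rewrite Hdisc, sqrt_pow2; lra.
Qed.

Section Asymptotics.

Variable kappa : R.
Hypothesis Hkappa : 1 < kappa.

(* [(p^2 - G(r,κ)) / (r(κ-1))] at [r = 1/x], using
   [p^2 - G(r,κ) = (r-1)^2 (r^2(κ-1) - (κ+3)) / ((r+1)^2 (r-3))]. *)
Definition disc_rescaled (x : R) : R :=
  (1 - x) ^ 2 * (1 - (kappa + 3) / (kappa - 1) * x ^ 2) / ((1 + x) ^ 2 * (1 - 3 * x)).

Definition a2_rescaled (x : R) : R :=
  (1 - x) / (1 + x) * sqrt (x / (kappa - 1)) + sqrt (disc_rescaled x).

Lemma a_Nk_rescaled (r : R) : 3 < r ->
  a_Nk r kappa / sqrt (sqrt (r * (kappa - 1))) = sqrt (a2_rescaled (/ r)).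
Proof.
  intros Hr.
  assert (Hrk : 0 < r * (kappa - 1)) by nra.
  assert (Hs : 0 < sqrt (r * (kappa - 1))) by (apply sqrt_lt_R0; lra).
  unfold a_Nk, a2_rescaled.
  rewrite <- sqrt_div_alt by exact Hs.
  f_equal.
  replace (/ r / (kappa - 1)) with (/ (r * (kappa - 1))) by (field; lra).
  replace (disc_rescaled (/ r))
    with ((((r - 1) / (r + 1)) ^ 2 - G r kappa) / (r * (kappa - 1)))
    by (unfold disc_rescaled, G; field; repeat split; lra).
  rewrite sqrt_inv, sqrt_div_alt by exact Hrk.
  field; lra.
Qed.

Lemma disc_rescaled_0 : disc_rescaled 0 = 1.
Proof. unfold disc_rescaled; field; lra. Qed.

Lemma a2_rescaled_0 : a2_rescaled 0 = 1.
Proof.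
  unfold a2_rescaled.
  rewrite Rdiv_0_l, disc_rescaled_0, sqrt_0, sqrt_1; field.
Qed.

Lemma a2_rescaled_continuous_0 : continuity_pt a2_rescaled 0.
Proof.
  unfold a2_rescaled.
  apply continuity_pt_plus.
  - apply continuity_pt_mult; [reg; lra|].
    apply continuity_pt_comp with (f2 := sqrt); [reg|].
    apply continuity_pt_sqrt; rewrite Rdiv_0_l; lra.
  - apply continuity_pt_comp with (f2 := sqrt); [unfold disc_rescaled; reg; lra|].
    apply continuity_pt_sqrt; rewrite disc_rescaled_0; lra.
Qed.

Lemma a_Nk_asymptotic :
  is_lim_seq (fun n : nat => a_Nk (INR n) kappa / sqrt (sqrt (INR n * (kappa - 1)))) 1.
Proof.
  assert (Hinv : is_lim_seq (fun n => / INR n) 0).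
  { apply (is_lim_seq_inv _ _ is_lim_seq_INR); discriminate. }
  assert (Hcont : continuity_pt (fun x => sqrt (a2_rescaled x)) 0).
  { apply continuity_pt_comp with (f2 := sqrt); [exact a2_rescaled_continuous_0|].
    apply continuity_pt_sqrt; rewrite a2_rescaled_0; lra. }
  assert (Hlim := is_lim_seq_continuous _ _ 0 Hcont Hinv).
  cbv beta in Hlim; rewrite a2_rescaled_0, sqrt_1 in Hlim.
  apply is_lim_seq_ext_loc with (fun n => sqrt (a2_rescaled (/ INR n))); [|exact Hlim].
  exists 4%nat; intros n Hn.
  symmetry; apply a_Nk_rescaled.
  replace 3 with (INR 3) by (simpl; ring); apply lt_INR; lia.
Qed.

End Asymptotics.

Theorem proposition1 :
  (forall (N : nat) (kappa a b : R),
      (5 <= N)%nat -> Nat.Odd N ->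
      0 < a ->
      emp_mean (fun x => x) (PhiN N a b) = 0 ->
      emp_mean (fun x => x ^ 2) (PhiN N a b) = 1 ->
      emp_mean (fun x => x ^ 4) (PhiN N a b) = kappa ->
      (* a^2 is the larger root of the quadratic *)
      (forall y : R,
          y ^ 2 - 2 * ((INR N - 1) / (INR N + 1)) * y + G (INR N) kappa = 0 ->
          y <= a ^ 2) ->
      (a ^ 2) ^ 2 - 2 * ((INR N - 1) / (INR N + 1)) * a ^ 2 + G (INR N) kappa = 0
      /\ a = a_Nk (INR N) kappa)
  /\
  (forall kappa : R, 1 < kappa ->
      is_lim_seq
        (fun n : nat => a_Nk (INR n) kappa / sqrt (sqrt (INR n * (kappa - 1))))
        1).
Proof.
  split.
  - (* The first-moment hypothesis holds automatically for [PhiN]. *)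
    intros N kappa a b H5 Hodd Ha _ H2 H4 Hlarger.
    assert (Hq := PhiN_moments_quadratic N kappa a b H5 Hodd H2 H4).
    split; [exact Hq|].
    unfold a_Nk.
    rewrite <- (larger_root_quadratic _ _ _ Hq Hlarger), sqrt_pow2; lra.
  - exact a_Nk_asymptotic.
Qed.
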